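(* $FUG\equiv_c FLO$.
   Context: Conventions: every structure is for a finite relational language and has universe a subset of $\omega$; a class of structures is a collection of structures for one fixed finite relational language closed under isomorphism. $D(\mathcal{A})$ is the atomic diagram of $\mathcal{A}$. A computable transformation from $K$ to $K'$ is a c.e. set $\Phi$ of pairs $(\alpha,\varphi)$, $\alpha$ a finite subset of the atomic diagram of a finite structure in the language of $K$, $\varphi$ an atomic sentence or negation of one in the language of $K'$, such that for every $\mathcal{A}\in K$, $\{\varphi:(\exists\alpha\subseteq D(\mathcal{A}))(\alpha,\varphi)\in\Phi\}=D(\mathcal{B})$ for some $\mathcal{B}\in K'$, written $\Phi(\mathcal{A})=\mathcal{B}$. A computable embedding is a computable transformation with $\mathcal{A}\cong\mathcal{A}'\iff\Phi(\mathcal{A})\cong\Phi(\mathcal{A}')$ for all $\mathcal{A},\mathcal{A}'\in K$; $K\le_c K'$ means one exists, and $K\equiv_c K'$ means $K\le_c K'$ and $K'\le_c K$. $FUG$ is the class of finite undirected graphs; $FLO$ is the class of finite linear orders. *)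

From Stdlib Require Import List Arith.
Import ListNotations.

(* Untyped syntax; arguments are given as a list, missing arguments default
   to 0.  These are exactly the primitive recursive functions. *)
Inductive PR : Type :=
| PZero : PR
| PSucc : PR
| PProj : nat -> PR
| PComp : PR -> list PR -> PR
| PRec  : PR -> PR -> PR.

Fixpoint pr_eval (p : PR) (xs : list nat) {struct p} : nat :=
  match p with
  | PZero => 0
  | PSucc => S (hd 0 xs)
  | PProj i => nth i xs 0
  | PComp f gs =>
      pr_eval f ((fix evs (l : list PR) : list nat :=
                    match l with
                    | [] => []
                    | g :: l' => pr_eval g xs :: evs l'
                    end) gs)
  | PRec f g =>
      let rest := tl xs in
      (fix rec (n : nat) : nat :=
         match n with
         | 0 => pr_eval f rest
         | S m => pr_eval g (m :: rec m :: rest)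
         end) (hd 0 xs)
  end.

(* A set of naturals is c.e. iff it is the projection of a primitive
   recursive relation (Kleene normal form). *)
Definition ce (P : nat -> Prop) : Prop :=
  exists p : PR, forall n, P n <-> exists k, pr_eval p [n; k] <> 0.

Definition cpair (x y : nat) : nat := (x + y) * (x + y + 1) / 2 + y.

Fixpoint code_list (l : list nat) : nat :=
  match l with
  | [] => 0
  | x :: l' => S (cpair x (code_list l'))
  end.

(* A finite relational language is the list of arities of its symbols;
   symbol i has arity nth i L 0. *)
Definition language := list nat.

(* atomic sentences with constants naming natural numbers *)
Inductive atom : Type :=
| AEq  : nat -> nat -> atom
| ARel : nat -> list nat -> atom.

(* a literal: (true, phi) is phi, (false, phi) is the negation of phi *)
Definition literal : Type := (bool * atom)%type.

Definition code_atom (a : atom) : nat :=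
  match a with
  | AEq x y => cpair 0 (cpair x y)
  | ARel i args => cpair 1 (cpair i (code_list args))
  end.

Definition code_lit (l : literal) : nat :=
  cpair (if fst l then 1 else 0) (code_atom (snd l)).

Definition code_lits (al : list literal) : nat := code_list (map code_lit al).

Definition code_pair (x : list literal * literal) : nat :=
  cpair (code_lits (fst x)) (code_lit (snd x)).

Definition wf_atom (L : language) (a : atom) : Prop :=
  match a with
  | AEq _ _ => True
  | ARel i args => i < length L /\ length args = nth i L 0
  end.

Definition wf_lit (L : language) (l : literal) : Prop := wf_atom L (snd l).

(* A structure: universe a subset of omega, and interpretations of the
   relation symbols (only tuples from the universe matter). *)
Record structure : Type := Struct {
  univ : nat -> Prop;
  rel  : nat -> list nat -> Prop
}.

Definition consts (a : atom) : list nat :=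
  match a with
  | AEq x y => [x; y]
  | ARel _ args => args
  end.

Definition atom_true (A : structure) (a : atom) : Prop :=
  match a with
  | AEq x y => x = y
  | ARel i args => rel A i args
  end.

Definition in_diagram (L : language) (A : structure) (l : literal) : Prop :=
  wf_lit L l /\ Forall (univ A) (consts (snd l)) /\
  (atom_true A (snd l) <-> fst l = true).

Definition finite_structure (A : structure) : Prop :=
  exists u : list nat, forall x, univ A x <-> In x u.

Definition iso (L : language) (A B : structure) : Prop :=
  exists f g : nat -> nat,
    (forall x, univ A x -> univ B (f x) /\ g (f x) = x) /\
    (forall y, univ B y -> univ A (g y) /\ f (g y) = y) /\
    (forall i args, i < length L -> length args = nth i L 0 ->
       Forall (univ A) args -> (rel A i args <-> rel B i (map f args))).

Record cls : Type := Cls {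
  lang : language;
  mem  : structure -> Prop
}.

Definition iso_closed (K : cls) : Prop :=
  forall A B, iso (lang K) A B -> mem K A -> mem K B.

(* Phi is a set of pairs (alpha, phi), alpha a finite set of literals
   (given as a list). *)
Definition image (K K' : cls) (Phi : list literal * literal -> Prop)
  (A B : structure) : Prop :=
  forall phi : literal,
    (exists alpha, (forall psi, In psi alpha -> in_diagram (lang K) A psi) /\
                   Phi (alpha, phi))
    <-> in_diagram (lang K') B phi.

Definition computable_transformation (K K' : cls)
  (Phi : list literal * literal -> Prop) : Prop :=
  ce (fun n => exists x, code_pair x = n /\ Phi x) /\
  (forall alpha phi, Phi (alpha, phi) ->
     (exists C, finite_structure C /\
        forall psi, In psi alpha -> in_diagram (lang K) C psi) /\
     wf_lit (lang K') phi) /\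
  (forall A, mem K A -> exists B, mem K' B /\ image K K' Phi A B).

Definition computable_embedding (K K' : cls)
  (Phi : list literal * literal -> Prop) : Prop :=
  computable_transformation K K' Phi /\
  (forall A A' B B', mem K A -> mem K A' ->
     image K K' Phi A B -> image K K' Phi A' B' ->
     (iso (lang K) A A' <-> iso (lang K') B B')).

Definition le_c (K K' : cls) : Prop :=
  exists Phi, computable_embedding K K' Phi.

Definition equiv_c (K K' : cls) : Prop := le_c K K' /\ le_c K' K.

Definition FUG : cls := Cls [2] (fun A =>
  finite_structure A /\
  (forall x y, univ A x -> univ A y -> rel A 0 [x; y] -> rel A 0 [y; x]) /\
  (forall x, univ A x -> ~ rel A 0 [x; x])).

(* linear orders, with the symbol read as <= *)
Definition FLO : cls := Cls [2] (fun A =>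
  finite_structure A /\
  (forall x, univ A x -> rel A 0 [x; x]) /\
  (forall x y, univ A x -> univ A y -> rel A 0 [x; y] -> rel A 0 [y; x] -> x = y) /\
  (forall x y z, univ A x -> univ A y -> univ A z ->
     rel A 0 [x; y] -> rel A 0 [y; z] -> rel A 0 [x; z]) /\
  (forall x y, univ A x -> univ A y -> rel A 0 [x; y] \/ rel A 0 [y; x])).

(** Both embeddings are instances of one construction for any two classes of
  finite structures in the language of one binary relation.  A *pattern* of
  a structure A is a pair (m, c) such that some injective enumeration
  t_0, ..., t_(m-1) of elements of A has relation matrix given by the bits
  of c (bit i*m+j of c says whether R(t_i, t_j)), with c < 2^(m*m).  The
  numbers e(m, c) = off m + c, where off m = Σ_(k<m) 2^(k*k), code patterns
  injectively.  The image B_lo(A) has as universe the union of the dyadic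
  blocks [2^e, 2^(e+1)) over the codes e of the patterns of A, and as
  relation ≤ (if lo) or the empty relation (otherwise): a finite linear
  order, respectively a finite edgeless graph.

  Then it shows that Φ_lo is a computable
  transformation with Φ_lo(A) = B_lo(A), that isomorphic structures have the
  same patterns, and conversely that B_lo(A) ≅ B_lo(A') forces
  |B_lo(A)| = |B_lo(A')|, hence (uniqueness of binary expansions) equal sets
  of pattern codes, hence A ≅ A' (compare the patterns of full length). *)

From Pilot Require Import Defs.
From Stdlib Require Import List Arith Lia Bool Classical ClassicalEpsilon.
Import ListNotations.

(** ** Primitive recursive expressions *)

(** Expressions over de Bruijn variables.  [ERec n b s] iterates [s]
    [n] times starting from [b]; inside [s], variable 0 is the iteration
    counter and variable 1 the accumulator. *)
Inductive expr : Type :=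
| EVar : nat -> expr
| EZero : expr
| ESucc : expr -> expr
| ERec : expr -> expr -> expr -> expr.

Fixpoint iter_rec (f0 : nat) (g : nat -> nat -> nat) (k : nat) : nat :=
  match k with 0 => f0 | S m => g m (iter_rec f0 g m) end.

Fixpoint eval (e : expr) (env : list nat) : nat :=
  match e with
  | EVar i => nth i env 0
  | EZero => 0
  | ESucc a => S (eval a env)
  | ERec n b s =>
      iter_rec (eval b env) (fun m acc => eval s (m :: acc :: env)) (eval n env)
  end.

Lemma iter_rec_ext f0 g g' k :
  (forall m a, m < k -> g m a = g' m a) -> iter_rec f0 g k = iter_rec f0 g' k.
Proof.
  intros H. induction k as [|k IH]; cbn; auto.
  rewrite H by lia. f_equal. apply IH. intros; apply H; lia.
Qed.

Fixpoint closed (e : expr) (N : nat) : bool :=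
  match e with
  | EVar i => i <? N
  | EZero => true
  | ESucc a => closed a N
  | ERec n b s => closed n N && closed b N && closed s (S (S N))
  end.

Definition projs (N : nat) : list PR := map PProj (seq 0 N).

Fixpoint compile (e : expr) (N : nat) : PR :=
  match e with
  | EVar i => PProj i
  | EZero => PZero
  | ESucc a => PComp PSucc [compile a N]
  | ERec n b s =>
      PComp (PRec (compile b N) (compile s (S (S N)))) (compile n N :: projs N)
  end.

Lemma pr_eval_comp f gs xs :
  pr_eval (PComp f gs) xs = pr_eval f (map (fun g => pr_eval g xs) gs).
Proof. cbn. f_equal. Qed.

Lemma pr_eval_rec f g xs :
  pr_eval (PRec f g) xs =
  iter_rec (pr_eval f (tl xs)) (fun m r => pr_eval g (m :: r :: tl xs)) (hd 0 xs).
Proof. cbn. induction (hd 0 xs); cbn; congruence. Qed.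

Lemma eval_agree e N env env' :
  closed e N = true -> (forall i, i < N -> nth i env 0 = nth i env' 0) ->
  eval e env = eval e env'.
Proof.
  revert N env env'.
  induction e as [i| |a IHa|n IHn b IHb s IHs]; intros N env env' Hc H; cbn in *.
  - apply H, Nat.ltb_lt, Hc.
  - reflexivity.
  - f_equal; eauto.
  - apply andb_prop in Hc as [Hc Hs]. apply andb_prop in Hc as [Hn Hb].
    rewrite (IHn N env env'), (IHb N env env') by assumption.
    apply iter_rec_ext. intros m a _. eapply IHs; [eassumption|].
    intros [|[|i]] Hi; cbn; auto. apply H; lia.
Qed.

Lemma map_projs env N :
  map (fun g => pr_eval g env) (projs N) = map (fun i => nth i env 0) (seq 0 N).
Proof. unfold projs. now rewrite map_map. Qed.

Lemma nth_map_seq (h : nat -> nat) s n i :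
  i < n -> nth i (map h (seq s n)) 0 = h (s + i).
Proof.
  intros Hi. rewrite nth_indep with (d' := h 0) by now rewrite length_map, length_seq.
  now rewrite map_nth, seq_nth.
Qed.

Theorem compile_correct e N env :
  closed e N = true -> pr_eval (compile e N) env = eval e env.
Proof.
  revert N env. induction e as [i| |a IHa|n IHn b IHb s IHs]; intros N env Hc.
  - reflexivity.
  - reflexivity.
  - cbn in *. now rewrite IHa.
  - cbn in Hc. apply andb_prop in Hc as [Hc Hs]. apply andb_prop in Hc as [Hn Hb].
    cbn [compile]. rewrite pr_eval_comp. cbn [map]. rewrite map_projs, pr_eval_rec.
    cbn [hd tl eval]. rewrite IHn, IHb by assumption.
    rewrite (eval_agree b N _ env Hb) by (intros i Hi; now rewrite nth_map_seq).
    apply iter_rec_ext. intros m a _. rewrite IHs by assumption.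
    eapply eval_agree; [eassumption|].
    intros [|[|i]] Hi; cbn; auto. rewrite nth_map_seq; [reflexivity|lia].
Qed.

Fixpoint lift (c d : nat) (e : expr) : expr :=
  match e with
  | EVar i => if i <? c then EVar i else EVar (i + d)
  | EZero => EZero
  | ESucc a => ESucc (lift c d a)
  | ERec n b s => ERec (lift c d n) (lift c d b) (lift (S (S c)) d s)
  end.

Lemma eval_lift e pre ext env :
  eval (lift (length pre) (length ext) e) (pre ++ ext ++ env) = eval e (pre ++ env).
Proof.
  revert pre. induction e as [i| |a IHa|n IHn b IHb s IHs]; intros pre; cbn [lift eval].
  - destruct (i <? length pre) eqn:E; cbn [eval].
    + apply Nat.ltb_lt in E. rewrite !app_nth1 by exact E; reflexivity.
    + apply Nat.ltb_ge in E. rewrite !app_nth2 by lia. f_equal. lia.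
  - reflexivity.
  - now rewrite IHa.
  - rewrite IHn, IHb. apply iter_rec_ext. intros m a _.
    apply (IHs (m :: a :: pre)).
Qed.

Lemma eval_lift1 e x env : eval (lift 0 1 e) (x :: env) = eval e env.
Proof. exact (eval_lift e [] [x] env). Qed.
Lemma eval_lift2 e x y env : eval (lift 0 2 e) (x :: y :: env) = eval e env.
Proof. exact (eval_lift e [] [x; y] env). Qed.
Lemma eval_lift3 e x y z env : eval (lift 0 3 e) (x :: y :: z :: env) = eval e env.
Proof. exact (eval_lift e [] [x; y; z] env). Qed.
Lemma eval_lift4 e x y z w env :
  eval (lift 0 4 e) (x :: y :: z :: w :: env) = eval e env.
Proof. exact (eval_lift e [] [x; y; z; w] env). Qed.
Lemma eval_lift_under1 e x y env :
  eval (lift 1 1 e) (x :: y :: env) = eval e (x :: env).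
Proof. exact (eval_lift e [x] [y] env). Qed.

Definition b2n (b : bool) : nat := if b then 1 else 0.

Definition Add a b := ERec b a (ESucc (EVar 1)).
Arguments Add : simpl never.
Lemma eval_Add a b env : eval (Add a b) env = eval a env + eval b env.
Proof. unfold Add; cbn. induction (eval b env) as [|k IH]; cbn; lia. Qed.

Definition Mul a b := ERec b EZero (Add (EVar 1) (lift 0 2 a)).
Arguments Mul : simpl never.
Lemma eval_Mul a b env : eval (Mul a b) env = eval a env * eval b env.
Proof.
  unfold Mul; cbn [eval]. induction (eval b env) as [|k IH]; cbn [iter_rec]; [lia|].
  rewrite eval_Add, eval_lift2. cbn. lia.
Qed.

Definition Pred a := ERec a EZero (EVar 0).
Arguments Pred : simpl never.
Lemma eval_Pred a env : eval (Pred a) env = eval a env - 1.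
Proof. unfold Pred; cbn. destruct (eval a env); cbn; lia. Qed.

Definition Sub a b := ERec b a (Pred (EVar 1)).
Arguments Sub : simpl never.
Lemma eval_Sub a b env : eval (Sub a b) env = eval a env - eval b env.
Proof.
  unfold Sub; cbn [eval]. induction (eval b env) as [|k IH]; cbn [iter_rec]; [lia|].
  rewrite eval_Pred. cbn. lia.
Qed.

Definition NotE a := ERec a (ESucc EZero) EZero.
Arguments NotE : simpl never.
Lemma eval_NotE a env : eval (NotE a) env = b2n (eval a env =? 0).
Proof. unfold NotE; cbn. now destruct (eval a env). Qed.

Lemma eval_NotE_b a env x :
  eval a env = b2n x -> eval (NotE a) env = b2n (negb x).
Proof. intros H. rewrite eval_NotE, H. now destruct x. Qed.

Definition EqE a b := NotE (Add (Sub a b) (Sub b a)).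
Arguments EqE : simpl never.
Lemma eval_EqE a b env : eval (EqE a b) env = b2n (eval a env =? eval b env).
Proof.
  unfold EqE. rewrite eval_NotE, eval_Add, !eval_Sub. f_equal.
  destruct (Nat.eqb_spec (eval a env) (eval b env)); apply Nat.eqb_eq || apply Nat.eqb_neq; lia.
Qed.

Definition LeE a b := NotE (Sub a b).
Arguments LeE : simpl never.
Lemma eval_LeE a b env : eval (LeE a b) env = b2n (eval a env <=? eval b env).
Proof.
  unfold LeE. rewrite eval_NotE, eval_Sub. f_equal.
  destruct (Nat.leb_spec (eval a env) (eval b env)); apply Nat.eqb_eq || apply Nat.eqb_neq; lia.
Qed.

Definition LtE a b := LeE (ESucc a) b.
Arguments LtE : simpl never.
Lemma eval_LtE a b env : eval (LtE a b) env = b2n (eval a env <? eval b env).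
Proof. apply eval_LeE. Qed.

Definition AndE a b := Mul a b.
Arguments AndE : simpl never.
Lemma eval_AndE a b env x y :
  eval a env = b2n x -> eval b env = b2n y -> eval (AndE a b) env = b2n (x && y).
Proof. intros H1 H2. unfold AndE. rewrite eval_Mul, H1, H2. now destruct x, y. Qed.

Definition OrE a b := NotE (NotE (Add a b)).
Arguments OrE : simpl never.
Lemma eval_OrE a b env x y :
  eval a env = b2n x -> eval b env = b2n y -> eval (OrE a b) env = b2n (x || y).
Proof. intros H1 H2. unfold OrE. rewrite !eval_NotE, eval_Add, H1, H2. now destruct x, y. Qed.

Definition Ite c a b := Add (Mul (NotE (NotE c)) a) (Mul (NotE c) b).
Arguments Ite : simpl never.
Lemma eval_Ite c a b env :
  eval (Ite c a b) env = if eval c env =? 0 then eval b env else eval a env.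
Proof.
  unfold Ite. rewrite eval_Add, !eval_Mul, !eval_NotE.
  destruct (eval c env =? 0); cbn; lia.
Qed.

Definition Pow a b := ERec b (ESucc EZero) (Mul (EVar 1) (lift 0 2 a)).
Arguments Pow : simpl never.
Lemma eval_Pow a b env : eval (Pow a b) env = eval a env ^ eval b env.
Proof.
  unfold Pow; cbn [eval]. induction (eval b env) as [|k IH]; cbn [iter_rec]; [reflexivity|].
  rewrite eval_Mul, eval_lift2. cbn. lia.
Qed.

(** Remainder and quotient, computed by counting up to the argument. *)
Lemma mod_succ a d :
  S a mod d = if S (a mod d) =? d then 0 else S (a mod d).
Proof.
  destruct d as [|d']; [reflexivity|].
  pose proof (Nat.div_mod a (S d') ltac:(lia)) as Ha.
  pose proof (Nat.mod_upper_bound a (S d') ltac:(lia)) as Hr.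
  destruct (Nat.eqb_spec (S (a mod S d')) (S d')); symmetry.
  - apply (Nat.mod_unique (S a) (S d') (S (a / S d')) 0); lia.
  - apply (Nat.mod_unique (S a) (S d') (a / S d')); lia.
Qed.

Lemma div_succ a d :
  S a / d = if S (a mod d) =? d then S (a / d) else a / d.
Proof.
  destruct d as [|d']; [reflexivity|].
  pose proof (Nat.div_mod a (S d') ltac:(lia)) as Ha.
  pose proof (Nat.mod_upper_bound a (S d') ltac:(lia)) as Hr.
  destruct (Nat.eqb_spec (S (a mod S d')) (S d')); symmetry.
  - apply (Nat.div_unique (S a) (S d') (S (a / S d')) 0); lia.
  - apply (Nat.div_unique (S a) (S d') (a / S d') (S (a mod S d'))); lia.
Qed.

Definition Mod a d :=
  ERec a EZero (Ite (EqE (ESucc (EVar 1)) (lift 0 2 d)) EZero (ESucc (EVar 1))).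
Arguments Mod : simpl never.
Lemma eval_Mod a d env : eval (Mod a d) env = eval a env mod eval d env.
Proof.
  unfold Mod; cbn [eval]. induction (eval a env) as [|k IH]; cbn [iter_rec].
  - symmetry. apply Nat.Div0.mod_0_l.
  - rewrite eval_Ite, eval_EqE. cbn [eval nth]. rewrite eval_lift2, IH, mod_succ.
    now destruct (S (k mod eval d env) =? eval d env).
Qed.

Definition Div a d := ERec a EZero
  (Ite (EqE (ESucc (Mod (EVar 0) (lift 0 2 d))) (lift 0 2 d)) (ESucc (EVar 1)) (EVar 1)).
Arguments Div : simpl never.
Lemma eval_Div a d env : eval (Div a d) env = eval a env / eval d env.
Proof.
  unfold Div; cbn [eval]. induction (eval a env) as [|k IH]; cbn [iter_rec].
  - symmetry. apply Nat.Div0.div_0_l.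
  - rewrite eval_Ite, eval_EqE. cbn [eval nth]. rewrite eval_Mod, eval_lift2.
    cbn [eval nth]. rewrite IH, div_succ. now destruct (S (k mod eval d env) =? eval d env).
Qed.

Definition dig (x b i : nat) : nat := (x / b ^ i) mod b.
Definition Dig x b i := Mod (Div x (Pow b i)) b.
Arguments Dig : simpl never.
Lemma eval_Dig x b i env :
  eval (Dig x b i) env = dig (eval x env) (eval b env) (eval i env).
Proof. unfold Dig. now rewrite eval_Mod, eval_Div, eval_Pow. Qed.

(** The Cantor pairing [cpair] of [Defs], via triangular numbers. *)
Fixpoint tri (n : nat) : nat := match n with 0 => 0 | S k => tri k + S k end.

Lemma cpair_tri x y : cpair x y = tri (x + y) + y.
Proof.
  assert (Htri : forall s, 2 * tri s = s * (s + 1)) by (induction s; cbn [tri]; nia).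
  unfold cpair. f_equal. rewrite <- Htri, Nat.mul_comm. apply Nat.div_mul. lia.
Qed.

Definition Tri a := ERec a EZero (Add (EVar 1) (ESucc (EVar 0))).
Arguments Tri : simpl never.
Lemma eval_Tri a env : eval (Tri a) env = tri (eval a env).
Proof.
  unfold Tri; cbn [eval]. induction (eval a env) as [|k IH]; cbn [iter_rec tri]; auto.
  rewrite eval_Add. cbn. now rewrite IH.
Qed.

Definition Cp a b := Add (Tri (Add a b)) b.
Arguments Cp : simpl never.
Lemma eval_Cp a b env : eval (Cp a b) env = cpair (eval a env) (eval b env).
Proof. unfold Cp. now rewrite eval_Add, eval_Tri, eval_Add, cpair_tri. Qed.

Fixpoint Num (n : nat) : expr := match n with 0 => EZero | S k => ESucc (Num k) end.
Lemma eval_Num n env : eval (Num n) env = n.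
Proof. induction n; cbn; auto. Qed.

(** Bounded sums and bounded universal quantification; the bound variable
    is variable 0 of the body. *)
Definition sumto (n : nat) (f : nat -> nat) : nat :=
  iter_rec 0 (fun m acc => acc + f m) n.

Lemma sumto_neq0 n f : sumto n f <> 0 <-> exists m, m < n /\ f m <> 0.
Proof.
  unfold sumto. induction n as [|n IH]; cbn [iter_rec].
  - split; [lia|]. intros (m & Hm & _); lia.
  - split.
    + intros H. destruct (Nat.eq_dec (f n) 0) as [Hf|Hf].
      * rewrite Hf, Nat.add_0_r in H. apply IH in H as (m & Hm & Hfm).
        exists m; split; [lia|exact Hfm].
      * exists n; split; [lia|exact Hf].
    + intros (m & Hm & Hfm). destruct (Nat.eq_dec m n) as [->|Hne]; [lia|].
      enough (iter_rec 0 (fun m0 acc => acc + f m0) n <> 0) by lia.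
      apply IH. exists m; split; [lia|exact Hfm].
Qed.

Definition Sum n body := ERec n EZero (Add (EVar 1) (lift 1 1 body)).
Arguments Sum : simpl never.
Lemma eval_Sum n body env :
  eval (Sum n body) env = sumto (eval n env) (fun m => eval body (m :: env)).
Proof.
  unfold Sum, sumto. cbn [eval]. apply iter_rec_ext. intros.
  now rewrite eval_Add, eval_lift_under1.
Qed.

Fixpoint allb (n : nat) (P : nat -> bool) : bool :=
  match n with 0 => true | S m => allb m P && P m end.

Lemma allb_spec n P : allb n P = true <-> forall m, m < n -> P m = true.
Proof.
  induction n as [|n IH]; cbn; [split; [lia|auto]|].
  rewrite andb_true_iff, IH. split.
  - intros [H1 H2] m Hm. destruct (Nat.eq_dec m n) as [->|]; [exact H2|]. apply H1; lia.
  - intros H. split; [intros; apply H; lia|apply H; lia].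
Qed.

Definition Fa n body := ERec n (ESucc EZero) (Mul (EVar 1) (lift 1 1 body)).
Arguments Fa : simpl never.
Lemma eval_Fa n body env P :
  (forall m, eval body (m :: env) = b2n (P m)) ->
  eval (Fa n body) env = b2n (allb (eval n env) P).
Proof.
  intros H. unfold Fa; cbn [eval]. induction (eval n env) as [|k IH]; cbn [iter_rec allb]; auto.
  rewrite eval_Mul, eval_lift_under1, H. cbn [eval nth]. rewrite IH.
  now destruct (allb k P), (P k).
Qed.

Fixpoint enc (b : nat) (l : list nat) : nat :=
  match l with [] => 0 | x :: l' => x + b * enc b l' end.

Lemma dig_enc b l i :
  0 < b -> Forall (fun x => x < b) l -> dig (enc b l) b i = nth i l 0.
Proof.
  intros Hb. revert i. induction l as [|x l IH]; intros i Hl; cbn [enc].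
  - unfold dig. rewrite Nat.Div0.div_0_l, Nat.Div0.mod_0_l. now destruct i.
  - inversion Hl as [|? ? Hx Hl']; subst. unfold dig in *. destruct i as [|i].
    + rewrite Nat.pow_0_r, Nat.div_1_r, Nat.mul_comm, Nat.Div0.mod_add.
      now apply Nat.mod_small.
    + cbn [nth]. rewrite <- IH by exact Hl'. f_equal.
      rewrite Nat.pow_succ_r', <- Nat.Div0.div_div. f_equal.
      rewrite Nat.add_comm, Nat.mul_comm, Nat.div_add_l by lia.
      rewrite Nat.div_small by exact Hx. lia.
Qed.

Lemma enc_lt b l : 0 < b -> Forall (fun x => x < b) l -> enc b l < b ^ length l.
Proof.
  intros Hb. induction l as [|x l IH]; intros Hl; cbn; [lia|].
  inversion Hl; subst. specialize (IH ltac:(assumption)). nia.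
Qed.

Lemma digits_exist (g : nat -> nat) b n :
  0 < b -> (forall i, i < n -> g i < b) ->
  exists x, x < b ^ n /\ forall i, i < n -> dig x b i = g i.
Proof.
  intros Hb Hg. set (l := map g (seq 0 n)).
  assert (Hl : Forall (fun x => x < b) l).
  { apply Forall_forall. intros x Hx. apply in_map_iff in Hx as (i & <- & Hi).
    apply in_seq in Hi. apply Hg; lia. }
  exists (enc b l). split.
  - replace n with (length l) by (unfold l; now rewrite length_map, length_seq).
    now apply enc_lt.
  - intros i Hi. rewrite dig_enc by assumption. unfold l. now rewrite nth_map_seq.
Qed.

Lemma sequence_code (t : nat -> nat) m :
  exists b T, forall i, i < m -> dig T b i = t i.
Proof.
  set (b := S (list_max (map t (seq 0 m)))).
  destruct (digits_exist t b m) as (T & _ & HT); [unfold b; lia| |eauto].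
  intros i Hi. enough (t i <= list_max (map t (seq 0 m))) by (unfold b; lia).
  pose proof (proj1 (list_max_le (map t (seq 0 m)) _) (le_n _)) as Hmax.
  rewrite Forall_forall in Hmax. apply Hmax, in_map, in_seq. lia.
Qed.

Lemma dig2_lt c k : dig c 2 k < 2.
Proof. apply Nat.mod_upper_bound. lia. Qed.

Lemma bits_exist (P : nat -> Prop) L :
  exists c, c < 2 ^ L /\ forall k, k < L -> (dig c 2 k = 1 <-> P k).
Proof.
  set (g k := if excluded_middle_informative (P k) then 1 else 0).
  destruct (digits_exist g 2 L) as (c & Hc & Hdig); [lia| |].
  - intros k _. unfold g. destruct (excluded_middle_informative (P k)); lia.
  - exists c. split; [exact Hc|]. intros k Hk. rewrite Hdig by exact Hk.
    unfold g. destruct (excluded_middle_informative (P k)) as [HP|HnP].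
    + split; [intros _; exact HP|reflexivity].
    + split; [discriminate|contradiction].
Qed.

(** ** The enumeration operator Φ_lo

  A candidate pattern is described by numbers [b, T, m, c]: its enumeration
  is [i ↦ dig T b i] for [i < m], and bit [i * m + j] of [c] says whether
  the relation holds between the [i]-th and the [j]-th element. *)

Definition injb b T m :=
  allb m (fun i => allb m (fun j => (i =? j) || negb (dig T b i =? dig T b j))).

(** Patterns of length [m] get the codes in [off m, off m + 2 ^ (m * m)). *)
Definition off m := sumto m (fun k => 2 ^ (k * k)).

(** The [j]-th element of the dyadic block [2 ^ e, 2 ^ (e + 1)) of the code
    [e = off m + c]. *)
Definition lab m c j := 2 ^ (off m + c) + j.

Definition validb b T m c j :=
  injb b T m && (c <? 2 ^ (m * m)) && (j <? 2 ^ (off m + c)).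

(** Two candidate patterns agree on the pairs of elements they both
    enumerate; this makes the union of their certificates satisfiable. *)
Definition consb b1 T1 m1 c1 b2 T2 m2 c2 :=
  allb m1 (fun i => allb m1 (fun j => allb m2 (fun i' => allb m2 (fun j' =>
    negb ((dig T1 b1 i =? dig T2 b2 i') && (dig T1 b1 j =? dig T2 b2 j'))
    || (dig c1 2 (i * m1 + j) =? dig c2 2 (i' * m2 + j')))))).

Definition cert_lit b T m c k : literal :=
  (dig c 2 k =? 1, ARel 0 [dig T b (k / m); dig T b (k mod m)]).

Fixpoint cert_lits b T m c N : list literal :=
  match N with 0 => [] | S k => cert_lit b T m c k :: cert_lits b T m c k end.

Definition cert b T m c := cert_lits b T m c (m * m).

Definition out_rel (lo : bool) x y := if lo then x <=? y else false.

Definition label_fact lo kind l1 l2 : literal :=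
  if kind =? 0 then (l1 =? l2, AEq l1 l2) else (out_rel lo l1 l2, ARel 0 [l1; l2]).

Definition phi_okb b1 T1 m1 c1 j1 b2 T2 m2 c2 j2 :=
  validb b1 T1 m1 c1 j1 && validb b2 T2 m2 c2 j2 && consb b1 T1 m1 c1 b2 T2 m2 c2.

Definition phi_elem lo b1 T1 m1 c1 j1 b2 T2 m2 c2 j2 kind :=
  (cert b1 T1 m1 c1 ++ cert b2 T2 m2 c2,
   label_fact lo kind (lab m1 c1 j1) (lab m2 c2 j2)).

(** Φ_lo: from the certificates of two labels, enumerate the facts about
    them. *)
Definition Phi lo (x : list literal * literal) : Prop :=
  exists b1 T1 m1 c1 j1 b2 T2 m2 c2 j2 kind,
    phi_okb b1 T1 m1 c1 j1 b2 T2 m2 c2 j2 = true /\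
    x = phi_elem lo b1 T1 m1 c1 j1 b2 T2 m2 c2 j2 kind.

Definition inj_below (t : nat -> nat) m :=
  forall i j, i < m -> j < m -> t i = t j -> i = j.

Definition consistent (t1 : nat -> nat) m1 c1 (t2 : nat -> nat) m2 c2 :=
  forall i j i' j', i < m1 -> j < m1 -> i' < m2 -> j' < m2 ->
    t1 i = t2 i' -> t1 j = t2 j' -> dig c1 2 (i * m1 + j) = dig c2 2 (i' * m2 + j').

Lemma injb_spec b T m : injb b T m = true <-> inj_below (dig T b) m.
Proof.
  unfold injb, inj_below. rewrite allb_spec. split.
  - intros H i j Hi Hj Heq. specialize (H i Hi). rewrite allb_spec in H.
    specialize (H j Hj). rewrite Heq, Nat.eqb_refl, orb_false_r in H.
    now apply Nat.eqb_eq.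
  - intros H i Hi. apply allb_spec. intros j Hj. apply orb_true_iff.
    destruct (Nat.eq_dec i j) as [->|Hne]; [left; apply Nat.eqb_refl|right].
    apply negb_true_iff, Nat.eqb_neq. intros E. exact (Hne (H i j Hi Hj E)).
Qed.

Lemma validb_spec b T m c j : validb b T m c j = true <->
  injb b T m = true /\ c < 2 ^ (m * m) /\ j < 2 ^ (off m + c).
Proof. unfold validb. rewrite !andb_true_iff, !Nat.ltb_lt. tauto. Qed.

Lemma consb_spec b1 T1 m1 c1 b2 T2 m2 c2 :
  consb b1 T1 m1 c1 b2 T2 m2 c2 = true <-> consistent (dig T1 b1) m1 c1 (dig T2 b2) m2 c2.
Proof.
  unfold consb, consistent. repeat setoid_rewrite allb_spec. split.
  - intros H i j i' j' Hi Hj Hi' Hj' E1 E2.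
    specialize (H i Hi j Hj i' Hi' j' Hj'). rewrite E1, E2, !Nat.eqb_refl in H.
    now apply Nat.eqb_eq.
  - intros H i Hi j Hj i' Hi' j' Hj'. apply orb_true_iff.
    destruct (Nat.eqb_spec (dig T1 b1 i) (dig T2 b2 i')) as [E1|]; [|now left].
    destruct (Nat.eqb_spec (dig T1 b1 j) (dig T2 b2 j')) as [E2|]; [|now left].
    right. apply Nat.eqb_eq. now apply H.
Qed.

(** ** Φ_lo is computably enumerable

  Each ingredient of [Phi] is computed by an expression; a bounded search
  over the eleven parameters then enumerates the codes of [Phi]. *)

(** Evaluate an inner [Fa] whose bound is a lifted expression, leaving
    the evaluation of its body at a fresh bound value. *)
Ltac eval_Fa_body :=
  erewrite eval_Fa;
  [rewrite ?eval_lift1, ?eval_lift2, ?eval_lift3; reflexivity | intro; cbv beta].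

Definition InjE b T m := Fa m (Fa (lift 0 1 m) (OrE (EqE (EVar 1) (EVar 0))
  (NotE (EqE (Dig (lift 0 2 T) (lift 0 2 b) (EVar 1))
             (Dig (lift 0 2 T) (lift 0 2 b) (EVar 0)))))).
Lemma eval_InjE b T m env :
  eval (InjE b T m) env = b2n (injb (eval b env) (eval T env) (eval m env)).
Proof.
  apply eval_Fa. intros i. eval_Fa_body.
  apply eval_OrE; [apply eval_EqE|]. apply eval_NotE_b.
  now rewrite eval_EqE, !eval_Dig, !eval_lift2.
Qed.

Definition OffE m := Sum m (Pow (Num 2) (Mul (EVar 0) (EVar 0))).
Lemma eval_OffE m env : eval (OffE m) env = off (eval m env).
Proof.
  unfold OffE, off. rewrite eval_Sum. apply iter_rec_ext. intros.
  now rewrite eval_Pow, eval_Num, eval_Mul.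
Qed.

Definition ValidE b T m c j :=
  AndE (AndE (InjE b T m) (LtE c (Pow (Num 2) (Mul m m))))
       (LtE j (Pow (Num 2) (Add (OffE m) c))).
Lemma eval_ValidE b T m c j env : eval (ValidE b T m c j) env =
  b2n (validb (eval b env) (eval T env) (eval m env) (eval c env) (eval j env)).
Proof.
  apply eval_AndE; [apply eval_AndE; [apply eval_InjE|]|].
  - now rewrite eval_LtE, eval_Pow, eval_Num, eval_Mul.
  - now rewrite eval_LtE, eval_Pow, eval_Num, eval_Add, eval_OffE.
Qed.

Definition ConsE b1 T1 m1 c1 b2 T2 m2 c2 :=
  let L4 := lift 0 4 in
  Fa m1 (Fa (lift 0 1 m1) (Fa (lift 0 2 m2) (Fa (lift 0 3 m2)
   (OrE (NotE (AndE (EqE (Dig (L4 T1) (L4 b1) (EVar 3)) (Dig (L4 T2) (L4 b2) (EVar 1)))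
                    (EqE (Dig (L4 T1) (L4 b1) (EVar 2)) (Dig (L4 T2) (L4 b2) (EVar 0)))))
        (EqE (Dig (L4 c1) (Num 2) (Add (Mul (EVar 3) (L4 m1)) (EVar 2)))
             (Dig (L4 c2) (Num 2) (Add (Mul (EVar 1) (L4 m2)) (EVar 0)))))))).
Lemma eval_ConsE b1 T1 m1 c1 b2 T2 m2 c2 env :
  eval (ConsE b1 T1 m1 c1 b2 T2 m2 c2) env =
  b2n (consb (eval b1 env) (eval T1 env) (eval m1 env) (eval c1 env)
             (eval b2 env) (eval T2 env) (eval m2 env) (eval c2 env)).
Proof.
  apply eval_Fa. intros i. do 3 eval_Fa_body.
  apply eval_OrE; [apply eval_NotE_b; apply eval_AndE|].
  - now rewrite eval_EqE, !eval_Dig, !eval_lift4.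
  - now rewrite eval_EqE, !eval_Dig, !eval_lift4.
  - now rewrite eval_EqE, !eval_Dig, !eval_Add, !eval_Mul, !eval_lift4, !eval_Num.
Qed.

Definition OkE b1 T1 m1 c1 j1 b2 T2 m2 c2 j2 :=
  AndE (AndE (ValidE b1 T1 m1 c1 j1) (ValidE b2 T2 m2 c2 j2))
       (ConsE b1 T1 m1 c1 b2 T2 m2 c2).
Lemma eval_OkE b1 T1 m1 c1 j1 b2 T2 m2 c2 j2 env :
  eval (OkE b1 T1 m1 c1 j1 b2 T2 m2 c2 j2) env =
  b2n (phi_okb (eval b1 env) (eval T1 env) (eval m1 env) (eval c1 env) (eval j1 env)
               (eval b2 env) (eval T2 env) (eval m2 env) (eval c2 env) (eval j2 env)).
Proof.
  apply eval_AndE; [apply eval_AndE; apply eval_ValidE|apply eval_ConsE].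
Qed.

Definition LabE m c j := Add (Pow (Num 2) (Add (OffE m) c)) j.
Lemma eval_LabE m c j env :
  eval (LabE m c j) env = lab (eval m env) (eval c env) (eval j env).
Proof. unfold LabE, lab. now rewrite eval_Add, eval_Pow, eval_Num, eval_Add, eval_OffE. Qed.

(** The code of [cert_lit] at the index held in variable 0. *)
Definition CertLitE b T m c :=
  let L2 := lift 0 2 in
  Cp (Dig (L2 c) (Num 2) (EVar 0)) (Cp (Num 1) (Cp (Num 0) (ESucc
    (Cp (Dig (L2 T) (L2 b) (Div (EVar 0) (L2 m)))
      (ESucc (Cp (Dig (L2 T) (L2 b) (Mod (EVar 0) (L2 m))) EZero)))))).

Lemma eval_CertLitE b T m c k acc env : eval (CertLitE b T m c) (k :: acc :: env) =
  code_lit (cert_lit (eval b env) (eval T env) (eval m env) (eval c env) k).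
Proof.
  assert (Hbit : (if dig (eval c env) 2 k =? 1 then 1 else 0) = dig (eval c env) 2 k).
  { pose proof (dig2_lt (eval c env) k). destruct (Nat.eqb_spec (dig (eval c env) 2 k) 1); lia. }
  unfold CertLitE, cert_lit, code_lit. cbn [fst snd code_atom code_list].
  repeat (rewrite ?eval_Cp, ?eval_Num, ?eval_Dig, ?eval_Div, ?eval_Mod, ?eval_lift2;
          cbn [eval nth]).
  now rewrite Hbit.
Qed.

(** The code of [cert b T m c ++ rl], given the code of [rl] as [r]. *)
Definition CertE b T m c r := ERec (Mul m m) r (ESucc (Cp (CertLitE b T m c) (EVar 1))).
Lemma eval_CertE b T m c r env rl : eval r env = code_list (map code_lit rl) ->
  eval (CertE b T m c r) env =
  code_list (map code_lit (cert (eval b env) (eval T env) (eval m env) (eval c env) ++ rl)).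
Proof.
  intros Hr. unfold CertE, cert. cbn [eval]. rewrite eval_Mul.
  induction (eval m env * eval m env) as [|N IH]; cbn [iter_rec cert_lits app map code_list].
  - exact Hr.
  - rewrite eval_Cp, eval_CertLitE. cbn [eval nth]. now rewrite IH.
Qed.

Definition OutE (lo : bool) a b := if lo then LeE a b else EZero.
Lemma eval_OutE lo a b env :
  eval (OutE lo a b) env = b2n (out_rel lo (eval a env) (eval b env)).
Proof. destruct lo; [apply eval_LeE|reflexivity]. Qed.

Definition FactE lo kind l1 l2 :=
  Ite kind (Cp (OutE lo l1 l2) (Cp (Num 1) (Cp (Num 0) (ESucc (Cp l1 (ESucc (Cp l2 EZero)))))))
           (Cp (EqE l1 l2) (Cp (Num 0) (Cp l1 l2))).
Lemma eval_FactE lo kind l1 l2 env : eval (FactE lo kind l1 l2) env =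
  code_lit (label_fact lo (eval kind env) (eval l1 env) (eval l2 env)).
Proof.
  unfold FactE, label_fact. rewrite eval_Ite.
  destruct (eval kind env =? 0); unfold code_lit; cbn [fst snd code_atom code_list].
  - now rewrite !eval_Cp, eval_EqE, eval_Num.
  - now repeat (rewrite ?eval_Cp, ?eval_OutE, ?eval_Num; cbn [eval]).
Qed.

Definition ElemCodeE lo b1 T1 m1 c1 j1 b2 T2 m2 c2 j2 kind :=
  Cp (CertE b1 T1 m1 c1 (CertE b2 T2 m2 c2 EZero))
     (FactE lo kind (LabE m1 c1 j1) (LabE m2 c2 j2)).
Lemma eval_ElemCodeE lo b1 T1 m1 c1 j1 b2 T2 m2 c2 j2 kind env :
  eval (ElemCodeE lo b1 T1 m1 c1 j1 b2 T2 m2 c2 j2 kind) env =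
  code_pair (phi_elem lo (eval b1 env) (eval T1 env) (eval m1 env) (eval c1 env)
    (eval j1 env) (eval b2 env) (eval T2 env) (eval m2 env) (eval c2 env)
    (eval j2 env) (eval kind env)).
Proof.
  unfold ElemCodeE, phi_elem, code_pair, code_lits. cbn [fst snd].
  rewrite eval_Cp, eval_FactE, !eval_LabE. f_equal.
  rewrite <- (app_nil_r (cert _ _ _ _ ++ cert _ _ _ _)), <- app_assoc.
  apply eval_CertE, (eval_CertE _ _ _ _ _ _ []). reflexivity.
Qed.

(** Nonzero iff the parameters (variables 10..0) pass [phi_okb] and the
    variable 11 is the code of the corresponding element of [Phi]. *)
Definition PhiTestE lo :=
  let v := EVar in
  Mul (OkE (v 10) (v 9) (v 8) (v 7) (v 6) (v 5) (v 4) (v 3) (v 2) (v 1))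
      (EqE (v 11) (ElemCodeE lo (v 10) (v 9) (v 8) (v 7) (v 6) (v 5) (v 4)
                             (v 3) (v 2) (v 1) (v 0))).
Lemma eval_PhiTestE lo b1 T1 m1 c1 j1 b2 T2 m2 c2 j2 kind n rest :
  eval (PhiTestE lo)
    (kind :: j2 :: c2 :: m2 :: T2 :: b2 :: j1 :: c1 :: m1 :: T1 :: b1 :: n :: rest) =
  b2n (phi_okb b1 T1 m1 c1 j1 b2 T2 m2 c2 j2) *
  b2n (n =? code_pair (phi_elem lo b1 T1 m1 c1 j1 b2 T2 m2 c2 j2 kind)).
Proof. unfold PhiTestE. now rewrite eval_Mul, eval_OkE, eval_EqE, eval_ElemCodeE. Qed.

(** In the environment [[n; k]], search all eleven parameters below [k]. *)
Definition PhiSearchE lo :=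
  Sum (EVar 1) (Sum (EVar 2) (Sum (EVar 3) (Sum (EVar 4) (Sum (EVar 5) (Sum (EVar 6)
  (Sum (EVar 7) (Sum (EVar 8) (Sum (EVar 9) (Sum (EVar 10) (Sum (EVar 11)
  (PhiTestE lo))))))))))).

Lemma eval_Sum_neq0 n body env :
  eval (Sum n body) env <> 0 <-> exists m, m < eval n env /\ eval body (m :: env) <> 0.
Proof. rewrite eval_Sum. apply sumto_neq0. Qed.

(** Choose [v] as the value of the outermost searched parameter. *)
Ltac search_below v :=
  apply eval_Sum_neq0; exists v; split; [cbn [eval nth]; lia|].

Theorem Phi_ce lo : ce (fun n => exists x, code_pair x = n /\ Phi lo x).
Proof.
  assert (Hclosed : closed (PhiSearchE lo) 2 = true) by (destruct lo; vm_compute; reflexivity).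
  pose proof (fun env => compile_correct _ 2 env Hclosed) as Hcompile.
  exists (compile (PhiSearchE lo) 2). intros n. setoid_rewrite Hcompile.
  unfold PhiSearchE. split.
  - intros (x & <- & b1 & T1 & m1 & c1 & j1 & b2 & T2 & m2 & c2 & j2 & kind & Hok & ->).
    exists (S (b1 + T1 + m1 + c1 + j1 + b2 + T2 + m2 + c2 + j2 + kind)).
    search_below b1. search_below T1. search_below m1. search_below c1.
    search_below j1. search_below b2. search_below T2. search_below m2.
    search_below c2. search_below j2. search_below kind.
    rewrite eval_PhiTestE, Hok, Nat.eqb_refl. discriminate.
  - intros [k H].
    repeat (apply eval_Sum_neq0 in H; destruct H as (? & _ & H)).
    rewrite eval_PhiTestE in H.
    match type of H with
    | b2n (phi_okb ?b1 ?T1 ?m1 ?c1 ?j1 ?b2 ?T2 ?m2 ?c2 ?j2) *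
      b2n (_ =? code_pair (phi_elem _ _ _ _ _ _ _ _ _ _ _ ?kind)) <> 0 =>
        destruct (phi_okb b1 T1 m1 c1 j1 b2 T2 m2 c2 j2) eqn:Hok; [|cbn in H; lia];
        destruct (Nat.eqb_spec n (code_pair (phi_elem lo b1 T1 m1 c1 j1 b2 T2 m2 c2 j2 kind)))
          as [->|]; [|cbn in H; lia];
        exists (phi_elem lo b1 T1 m1 c1 j1 b2 T2 m2 c2 j2 kind); split; [reflexivity|];
        exists b1, T1, m1, c1, j1, b2, T2, m2, c2, j2, kind; split; auto
    end.
Qed.

Definition realizes (A : structure) b T m c :=
  forall psi, In psi (cert b T m c) -> in_diagram [2] A psi.

Lemma In_cert_lits b T m c N psi :
  In psi (cert_lits b T m c N) <-> exists k, k < N /\ psi = cert_lit b T m c k.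
Proof.
  induction N as [|N IH]; cbn [cert_lits In].
  - split; [tauto|]. intros (k & Hk & _); lia.
  - rewrite IH. split.
    + intros [<-|(k & Hk & ->)]; [exists N|exists k]; split; auto; lia.
    + intros (k & Hk & ->). destruct (Nat.eq_dec k N) as [->|Hne]; [now left|].
      right. exists k; split; [lia|reflexivity].
Qed.

Lemma divmod_pair m i j : j < m -> (i * m + j) / m = i /\ (i * m + j) mod m = j.
Proof.
  intros Hj. split.
  - rewrite Nat.div_add_l, Nat.div_small by lia. lia.
  - rewrite Nat.add_comm, Nat.Div0.mod_add. now apply Nat.mod_small.
Qed.

Lemma realizes_rel A b T m c i j : realizes A b T m c -> i < m -> j < m ->
  univ A (dig T b i) /\ (rel A 0 [dig T b i; dig T b j] <-> dig c 2 (i * m + j) = 1).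
Proof.
  intros HR Hi Hj.
  assert (Hk : In (cert_lit b T m c (i * m + j)) (cert b T m c))
    by (apply In_cert_lits; exists (i * m + j); split; [nia|reflexivity]).
  apply HR in Hk. unfold cert_lit, in_diagram in Hk. cbn [fst snd consts atom_true] in Hk.
  destruct (divmod_pair m i j Hj) as [Ei Ej]. rewrite Ei, Ej in Hk.
  destruct Hk as (_ & Hu & Hrel). inversion Hu; subst.
  split; [assumption|]. rewrite Hrel. apply Nat.eqb_eq.
Qed.

Lemma realizes_intro A b T m c :
  (forall i j, i < m -> j < m -> univ A (dig T b i) /\
     (rel A 0 [dig T b i; dig T b j] <-> dig c 2 (i * m + j) = 1)) ->
  realizes A b T m c.
Proof.
  intros H psi Hpsi. apply In_cert_lits in Hpsi as (k & Hk & ->).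
  assert (Hm : m <> 0) by (intros ->; cbn in Hk; lia).
  set (i := k / m). set (j := k mod m).
  assert (Hj : j < m) by now apply Nat.mod_upper_bound.
  assert (Hkij : k = i * m + j) by (unfold i, j; rewrite Nat.mul_comm; now apply Nat.div_mod).
  assert (Hi : i < m) by nia.
  unfold cert_lit, in_diagram. cbn [fst snd consts atom_true wf_lit wf_atom]. fold i j.
  destruct (H i j Hi Hj) as [Hu1 Hr]. destruct (H j i Hj Hi) as [Hu2 _].
  split; [cbn; auto|]. split; [repeat constructor; assumption|].
  rewrite Hr, <- Hkij. symmetry. apply Nat.eqb_eq.
Qed.

Lemma realizes_ext A A' b T m c :
  (forall x, univ A x <-> univ A' x) ->
  (forall x y, rel A 0 [x; y] <-> rel A' 0 [x; y]) ->
  realizes A b T m c -> realizes A' b T m c.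
Proof.
  intros HU HR HA. apply realizes_intro. intros i j Hi Hj.
  rewrite <- HU, <- HR. now apply realizes_rel.
Qed.

Lemma realizes_consistent A b1 T1 m1 c1 b2 T2 m2 c2 :
  realizes A b1 T1 m1 c1 -> realizes A b2 T2 m2 c2 ->
  consistent (dig T1 b1) m1 c1 (dig T2 b2) m2 c2.
Proof.
  intros R1 R2 i j i' j' Hi Hj Hi' Hj' E1 E2.
  destruct (realizes_rel A b1 T1 m1 c1 i j R1 Hi Hj) as [_ H1].
  destruct (realizes_rel A b2 T2 m2 c2 i' j' R2 Hi' Hj') as [_ H2].
  rewrite E1, E2, H2 in H1.
  pose proof (dig2_lt c1 (i * m1 + j)). pose proof (dig2_lt c2 (i' * m2 + j')).
  destruct (Nat.eq_dec (dig c2 2 (i' * m2 + j')) 1); intuition lia.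
Qed.

Lemma consistent_sym t1 m1 c1 t2 m2 c2 :
  consistent t1 m1 c1 t2 m2 c2 -> consistent t2 m2 c2 t1 m1 c1.
Proof. intros H i j i' j' Hi Hj Hi' Hj' E1 E2. symmetry. now apply H. Qed.

(** Conversely, two consistent injective candidate patterns are realized
    together in the finite structure generated by their enumerations. *)
Definition enumerated (t : nat -> nat) m x := exists i, i < m /\ x = t i.

Definition matrix_rel (t : nat -> nat) m c x y :=
  exists i j, i < m /\ j < m /\ x = t i /\ y = t j /\ dig c 2 (i * m + j) = 1.

Definition union_structure t1 m1 c1 t2 m2 c2 : structure :=
  Struct (fun x => enumerated t1 m1 x \/ enumerated t2 m2 x)
    (fun _ args => match args with
       | [x; y] => matrix_rel t1 m1 c1 x y \/ matrix_rel t2 m2 c2 x y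
       | _ => False end).

Lemma union_structure_finite t1 m1 c1 t2 m2 c2 :
  finite_structure (union_structure t1 m1 c1 t2 m2 c2).
Proof.
  exists (map t1 (seq 0 m1) ++ map t2 (seq 0 m2)). intros x. cbn [univ union_structure].
  unfold enumerated. rewrite in_app_iff, !in_map_iff.
  setoid_rewrite in_seq. split.
  - intros [(i & Hi & ->)|(i & Hi & ->)]; [left|right]; exists i; split; auto; lia.
  - intros [(i & <- & Hi)|(i & <- & Hi)]; [left|right]; exists i; split; auto; lia.
Qed.

Lemma union_realizes_left b1 T1 m1 c1 t2 m2 c2 :
  inj_below (dig T1 b1) m1 -> consistent (dig T1 b1) m1 c1 t2 m2 c2 ->
  realizes (union_structure (dig T1 b1) m1 c1 t2 m2 c2) b1 T1 m1 c1.
Proof.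
  intros Hinj Hcons. apply realizes_intro. intros i j Hi Hj. split.
  - left. now exists i.
  - cbn [rel union_structure]. split.
    + intros [(i' & j' & Hi' & Hj' & E1 & E2 & Hd)|(i' & j' & Hi' & Hj' & E1 & E2 & Hd)].
      * apply Hinj in E1, E2; [subst; exact Hd|assumption..].
      * rewrite (Hcons i j i' j'); auto.
    + intros Hd. left. exists i, j. auto.
Qed.

Lemma union_realizes_right t1 m1 c1 b2 T2 m2 c2 :
  inj_below (dig T2 b2) m2 -> consistent t1 m1 c1 (dig T2 b2) m2 c2 ->
  realizes (union_structure t1 m1 c1 (dig T2 b2) m2 c2) b2 T2 m2 c2.
Proof.
  intros Hinj Hcons.
  apply (realizes_ext (union_structure (dig T2 b2) m2 c2 t1 m1 c1)); [cbn; tauto..|].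
  apply union_realizes_left; [assumption|]. now apply consistent_sym.
Qed.

Lemma Phi_premises_satisfiable lo alpha phi : Phi lo (alpha, phi) ->
  exists C, finite_structure C /\ forall psi, In psi alpha -> in_diagram [2] C psi.
Proof.
  intros (b1 & T1 & m1 & c1 & j1 & b2 & T2 & m2 & c2 & j2 & kind & Hok & He).
  injection He as -> _.
  unfold phi_okb in Hok. rewrite !andb_true_iff, !validb_spec, !injb_spec, consb_spec in Hok.
  destruct Hok as [[[I1 _] [I2 _]] Hcons].
  exists (union_structure (dig T1 b1) m1 c1 (dig T2 b2) m2 c2).
  split; [apply union_structure_finite|].
  intros psi Hpsi. apply in_app_or in Hpsi as [Hpsi|Hpsi]; revert psi Hpsi.
  - now apply union_realizes_left.
  - now apply union_realizes_right.
Qed.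

Lemma label_fact_wf lo kind l1 l2 : wf_lit [2] (label_fact lo kind l1 l2).
Proof. unfold label_fact. destruct (kind =? 0); cbn; [exact I|split; [lia|reflexivity]]. Qed.

(** ** The image structure B_lo(A) *)

Definition is_label (A : structure) l :=
  exists b T m c j, validb b T m c j = true /\ realizes A b T m c /\ l = lab m c j.

Definition label_structure (lo : bool) (A : structure) : structure :=
  Struct (is_label A)
    (fun _ args => match args with [x; y] => out_rel lo x y = true | _ => False end).

Lemma Phi_yields_label_facts lo A alpha phi :
  (forall psi, In psi alpha -> in_diagram [2] A psi) -> Phi lo (alpha, phi) ->
  exists l1 l2 kind, is_label A l1 /\ is_label A l2 /\ phi = label_fact lo kind l1 l2.
Proof.
  intros HD (b1 & T1 & m1 & c1 & j1 & b2 & T2 & m2 & c2 & j2 & kind & Hok & He).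
  injection He as Ealpha Ephi. unfold phi_okb in Hok. rewrite !andb_true_iff in Hok.
  destruct Hok as [[V1 V2] _].
  exists (lab m1 c1 j1), (lab m2 c2 j2), kind. split; [|split; [|exact Ephi]].
  - exists b1, T1, m1, c1, j1. split; [exact V1|split; [|reflexivity]].
    intros psi1 Hpsi1. apply HD. rewrite Ealpha. apply in_or_app. auto.
  - exists b2, T2, m2, c2, j2. split; [exact V2|split; [|reflexivity]].
    intros psi1 Hpsi1. apply HD. rewrite Ealpha. apply in_or_app. auto.
Qed.

Lemma Phi_covers_label_facts lo A l1 l2 kind : is_label A l1 -> is_label A l2 ->
  exists alpha, (forall psi, In psi alpha -> in_diagram [2] A psi) /\
                Phi lo (alpha, label_fact lo kind l1 l2).
Proof.
  intros (b1 & T1 & m1 & c1 & j1 & V1 & R1 & ->) (b2 & T2 & m2 & c2 & j2 & V2 & R2 & ->).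
  exists (cert b1 T1 m1 c1 ++ cert b2 T2 m2 c2). split.
  - intros psi Hpsi. apply in_app_or in Hpsi as [Hpsi|Hpsi]; auto.
  - exists b1, T1, m1, c1, j1, b2, T2, m2, c2, j2, kind. split; [|reflexivity].
    unfold phi_okb. rewrite V1, V2. apply consb_spec. eapply realizes_consistent; eassumption.
Qed.

Lemma label_structure_diagram lo A phi :
  in_diagram [2] (label_structure lo A) phi <->
  exists l1 l2 kind, is_label A l1 /\ is_label A l2 /\ phi = label_fact lo kind l1 l2.
Proof.
  destruct phi as [pol [x y|i args]]; unfold in_diagram, label_fact;
    cbn [fst snd consts atom_true wf_lit wf_atom univ rel label_structure].
  - split.
    + intros (_ & Hu & Htrue). inversion Hu as [|? ? Hx Hu']; inversion Hu'; subst.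
      exists x, y, 0. repeat split; auto. cbn. f_equal.
      destruct (Nat.eqb_spec x y), pol; intuition congruence.
    + intros (l1 & l2 & kind & H1 & H2 & E). destruct (kind =? 0); [|discriminate].
      injection E as -> -> ->. split; [exact I|].
      split; [repeat constructor; assumption|symmetry; apply Nat.eqb_eq].
  - split.
    + intros ([Hi Hlen] & Hu & Htrue). cbn in Hi, Hlen. assert (i = 0) as -> by lia.
      destruct args as [|x [|y [|z args]]]; cbn in Hlen; try lia.
      inversion Hu as [|? ? Hx Hu']; inversion Hu'; subst.
      exists x, y, 1. repeat split; auto. cbn. f_equal.
      destruct (out_rel lo x y), pol; intuition congruence.
    + intros (l1 & l2 & kind & H1 & H2 & E). destruct (kind =? 0); [discriminate|].
      injection E as -> -> ->. split; [cbn; split; [lia|reflexivity]|].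
      split; [repeat constructor; assumption|tauto].
Qed.

Lemma Phi_image K K' lo A : lang K = [2] -> lang K' = [2] ->
  image K K' (Phi lo) A (label_structure lo A).
Proof.
  intros HK HK' phi. rewrite HK, HK', label_structure_diagram. split.
  - intros (alpha & HD & HP). eapply Phi_yields_label_facts; eassumption.
  - intros (l1 & l2 & kind & H1 & H2 & ->). now apply Phi_covers_label_facts.
Qed.

Definition is_pattern (A : structure) m c :=
  exists b T, injb b T m = true /\ c < 2 ^ (m * m) /\ realizes A b T m c.

Definition is_code (A : structure) e := exists m c, is_pattern A m c /\ e = off m + c.

Definition block (e : nat) : list nat := seq (2 ^ e) (2 ^ e).

Lemma is_label_iff A l : is_label A l <-> exists e, is_code A e /\ In l (block e).
Proof.
  unfold block. setoid_rewrite in_seq. split.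
  - intros (b & T & m & c & j & V & R & ->). apply validb_spec in V as (I & Hc & Hj).
    exists (off m + c). split; [exists m, c; split; [exists b, T; auto|reflexivity]|].
    unfold lab. lia.
  - intros (e & (m & c & (b & T & I & Hc & R) & ->) & Hl).
    exists b, T, m, c, (l - 2 ^ (off m + c)). split; [|split; [exact R|unfold lab; lia]].
    apply validb_spec. repeat split; auto. lia.
Qed.

Lemma NoDup_map_seq (t : nat -> nat) m :
  inj_below t m -> NoDup (map t (seq 0 m)).
Proof.
  intros Hinj. apply NoDup_map_NoDup_ForallPairs; [|apply seq_NoDup].
  intros i j Hi Hj. apply in_seq in Hi, Hj. apply Hinj; lia.
Qed.

Lemma inj_below_length (t : nat -> nat) m u :
  inj_below t m -> (forall i, i < m -> In (t i) u) -> m <= length u.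
Proof.
  intros Hinj Hin. replace m with (length (map t (seq 0 m))) at 1
    by now rewrite length_map, length_seq.
  apply NoDup_incl_length; [now apply NoDup_map_seq|].
  intros y (i & <- & Hi)%in_map_iff. apply in_seq in Hi. apply Hin. lia.
Qed.

Lemma pattern_length_bound A u m c :
  (forall x, univ A x <-> In x u) -> is_pattern A m c -> m <= length u.
Proof.
  intros Hu (b & T & I & _ & R). apply (inj_below_length (dig T b)).
  - now apply injb_spec.
  - intros i Hi. apply Hu. apply (realizes_rel A b T m c i i R Hi Hi).
Qed.

Lemma off_succ m : off (S m) = off m + 2 ^ (m * m).
Proof. reflexivity. Qed.

Lemma off_mono m m' : m <= m' -> off m <= off m'.
Proof. induction 1; [lia|rewrite off_succ; lia]. Qed.

Lemma off_inj m c m' c' : c < 2 ^ (m * m) -> c' < 2 ^ (m' * m') ->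
  off m + c = off m' + c' -> m = m' /\ c = c'.
Proof.
  intros Hc Hc' E. destruct (lt_eq_lt_dec m m') as [[Hlt|Heq]|Hlt].
  - pose proof (off_mono (S m) m' Hlt) as Hoff. rewrite off_succ in Hoff. lia.
  - subst. lia.
  - pose proof (off_mono (S m') m Hlt) as Hoff. rewrite off_succ in Hoff. lia.
Qed.

Lemma code_bound A u e : (forall x, univ A x <-> In x u) -> is_code A e -> e < off (S (length u)).
Proof.
  intros Hu (m & c & HP & ->). pose proof (pattern_length_bound A u m c Hu HP) as Hm.
  destruct HP as (_ & _ & _ & Hc & _).
  pose proof (off_mono (S m) (S (length u)) ltac:(lia)) as Hoff.
  rewrite off_succ in Hoff. lia.
Qed.

Lemma finite_subset (P : nat -> Prop) l :
  (forall x, P x -> In x l) -> exists u, NoDup u /\ forall x, P x <-> In x u.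
Proof.
  revert P. induction l as [|a l IH]; intros P H.
  - exists []. split; [constructor|]. intros x. split; [apply H|contradiction].
  - destruct (IH (fun x => P x /\ x <> a)) as (u & Hnd & Hu).
    { intros x [Hx Hne]. destruct (H x Hx); [congruence|assumption]. }
    destruct (classic (P a)) as [Ha|Ha].
    + exists (a :: u). split; [constructor; [rewrite <- Hu; tauto|exact Hnd]|].
      intros x. cbn. rewrite <- Hu. destruct (Nat.eq_dec a x) as [->|]; intuition.
    + exists u. split; [exact Hnd|]. intros x. rewrite <- Hu.
      split; [intros Hx; split; [exact Hx|intros ->; contradiction]|tauto].
Qed.

Lemma codes_list A u : (forall x, univ A x <-> In x u) ->
  exists El, NoDup El /\ (forall e, is_code A e <-> In e El) /\
             (forall l, is_label A l <-> In l (flat_map block El)).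
Proof.
  intros Hu. destruct (finite_subset (is_code A) (seq 0 (off (S (length u))))) as (El & Hnd & HE).
  - intros e He. apply in_seq. pose proof (code_bound A u e Hu He). lia.
  - exists El. split; [exact Hnd|]. split; [exact HE|].
    intros l. rewrite is_label_iff, in_flat_map. now setoid_rewrite HE.
Qed.

Lemma label_structure_finite lo A : finite_structure A -> finite_structure (label_structure lo A).
Proof.
  intros [u Hu]. destruct (codes_list A u Hu) as (El & _ & _ & HL).
  now exists (flat_map block El).
Qed.

(** ** Isomorphic structures have the same image *)

Lemma iso_sym A A' : iso [2] A A' -> iso [2] A' A.
Proof.
  intros (f & g & Hf & Hg & Hrel). exists g, f. split; [exact Hg|]. split; [exact Hf|].
  intros i args Hi Hlen Hargs.
  assert (Hargs' : Forall (univ A) (map g args)).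
  { apply Forall_map. eapply Forall_impl; [|exact Hargs]. intros a Ha. apply Hg, Ha. }
  rewrite (Hrel i (map g args) Hi) by (rewrite ?length_map; assumption).
  rewrite map_map. replace (map (fun x => f (g x)) args) with args; [tauto|].
  clear Hlen Hargs'. induction Hargs; cbn; f_equal; auto. symmetry. now apply Hg.
Qed.

(** Transporting an enumeration along an isomorphism preserves its
    certificate, hence labels. *)
Lemma iso_preserves_labels A A' l : iso [2] A A' -> is_label A l -> is_label A' l.
Proof.
  intros (f & g & Hf & _ & Hrel) (b & T & m & c & j & V & R & ->).
  destruct (sequence_code (fun i => f (dig T b i)) m) as (b' & T' & HT').
  apply validb_spec in V as (I & Hc & Hj). apply injb_spec in I.
  exists b', T', m, c, j. split; [|split; [|reflexivity]].
  - apply validb_spec. repeat split; auto. apply injb_spec. intros i k Hi Hk E.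
    rewrite !HT' in E by assumption. apply I; [assumption..|].
    destruct (realizes_rel A b T m c i i R Hi Hi) as [Ui _].
    destruct (realizes_rel A b T m c k k R Hk Hk) as [Uk _].
    rewrite <- (proj2 (Hf _ Ui)), <- (proj2 (Hf _ Uk)). congruence.
  - apply realizes_intro. intros i k Hi Hk. rewrite !HT' by assumption.
    destruct (realizes_rel A b T m c i k R Hi Hk) as [Ui HR].
    destruct (realizes_rel A b T m c k k R Hk Hk) as [Uk _].
    split; [now apply Hf|]. rewrite <- HR. symmetry.
    apply (Hrel 0 [dig T b i; dig T b k]); cbn; auto.
Qed.

Definition same_diagram (B B' : structure) :=
  forall phi, in_diagram [2] B phi <-> in_diagram [2] B' phi.

Lemma in_diagram_eq C x : in_diagram [2] C (true, AEq x x) <-> univ C x.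
Proof.
  unfold in_diagram. cbn. split.
  - intros (_ & Hu & _). now inversion Hu.
  - intros H. split; [exact I|]. split; [repeat constructor; assumption|tauto].
Qed.

Lemma in_diagram_rel C x y :
  in_diagram [2] C (true, ARel 0 [x; y]) <-> univ C x /\ univ C y /\ rel C 0 [x; y].
Proof.
  unfold in_diagram. cbn. split.
  - intros (_ & Hu & Hrel). inversion Hu as [|? ? Hx Hu']; inversion Hu'; subst. tauto.
  - intros (Hx & Hy & Hr). split; [split; [lia|reflexivity]|].
    split; [repeat constructor; assumption|tauto].
Qed.

Lemma same_diagram_iso B B' : same_diagram B B' -> iso [2] B B'.
Proof.
  intros H. assert (HU : forall x, univ B x <-> univ B' x)
    by (intros x; rewrite <- !in_diagram_eq; apply H).
  exists (fun x => x), (fun x => x).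
  split; [intros x Hx; split; [apply HU, Hx|reflexivity]|].
  split; [intros x Hx; split; [apply HU, Hx|reflexivity]|].
  intros i args Hi Hlen Hargs. cbn in Hi. assert (i = 0) as -> by lia.
  destruct args as [|x [|y [|z args]]]; cbn in Hlen; try lia. rewrite map_id.
  inversion Hargs as [|? ? Hx Hargs']; inversion Hargs'; subst.
  specialize (H (true, ARel 0 [x; y])). rewrite !in_diagram_rel, <- (HU x), <- (HU y) in H.
  tauto.
Qed.

Lemma image_same_diagram K K' lo A B : lang K = [2] -> lang K' = [2] ->
  image K K' (Phi lo) A B -> same_diagram B (label_structure lo A).
Proof.
  intros HK HK' HB phi. pose proof (HB phi) as E1. pose proof (Phi_image K K' lo A HK HK' phi) as E2.
  rewrite HK' in E1, E2. rewrite <- E1, <- E2. reflexivity.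
Qed.

Lemma iso_same_image K K' lo A A' B B' : lang K = [2] -> lang K' = [2] ->
  image K K' (Phi lo) A B -> image K K' (Phi lo) A' B' -> iso [2] A A' -> iso [2] B B'.
Proof.
  intros HK HK' HB HB' Hiso. apply same_diagram_iso. intros phi.
  rewrite (image_same_diagram K K' lo A B HK HK' HB phi),
          (image_same_diagram K K' lo A' B' HK HK' HB' phi), !label_structure_diagram.
  assert (HL : forall l, is_label A l <-> is_label A' l).
  { intros l. split; apply iso_preserves_labels; [exact Hiso|now apply iso_sym]. }
  now setoid_rewrite HL.
Qed.

(** ** Isomorphic images have the same codes

  The universe of B_lo(A) is the disjoint union of the blocks of the codes
  of [A], so its size is the sum of [2 ^ e] over these codes; as binary
  expansions are unique, the size determines the codes. *)

Lemma length_le_of_injection (h k : nat -> nat) a a' :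
  NoDup a -> (forall x, In x a -> In (h x) a' /\ k (h x) = x) -> length a <= length a'.
Proof.
  intros Hnd Hh. rewrite <- (length_map h). apply NoDup_incl_length.
  - apply NoDup_map_NoDup_ForallPairs; [|exact Hnd].
    intros x y Hx Hy E. rewrite <- (proj2 (Hh x Hx)), <- (proj2 (Hh y Hy)). congruence.
  - intros y (x & <- & Hx)%in_map_iff. now apply Hh.
Qed.

Lemma iso_card B B' l l' : iso [2] B B' ->
  (forall x, univ B x <-> In x l) -> (forall x, univ B' x <-> In x l') ->
  NoDup l -> NoDup l' -> length l = length l'.
Proof.
  intros (f & g & Hf & Hg & _) Hl Hl' Hnd Hnd'. apply Nat.le_antisymm.
  - apply (length_le_of_injection f g); [exact Hnd|]. intros x Hx%Hl.
    destruct (Hf x Hx) as [Hfx Hgf]. split; [now apply Hl'|exact Hgf].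
  - apply (length_le_of_injection g f); [exact Hnd'|]. intros y Hy%Hl'.
    destruct (Hg y Hy) as [Hgy Hfg]. split; [now apply Hl|exact Hfg].
Qed.

Lemma block_unique e e' x : In x (block e) -> In x (block e') -> e = e'.
Proof.
  unfold block. rewrite !in_seq. intros H1 H2.
  destruct (lt_eq_lt_dec e e') as [[Hlt|Heq]|Hlt]; [exfalso| exact Heq |exfalso].
  - pose proof (Nat.pow_le_mono_r 2 (S e) e' ltac:(lia) Hlt). cbn in *. lia.
  - pose proof (Nat.pow_le_mono_r 2 (S e') e ltac:(lia) Hlt). cbn in *. lia.
Qed.

Lemma blocks_NoDup El : NoDup El -> NoDup (flat_map block El).
Proof.
  induction El as [|e El IH]; intros Hnd; cbn; [constructor|].
  inversion Hnd as [|? ? He Hnd']; subst. apply NoDup_app; [apply seq_NoDup|now apply IH|].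
  intros x Hx (e' & He' & Hx')%in_flat_map. apply He.
  now rewrite (block_unique e e' x Hx Hx').
Qed.

Fixpoint sumpow (X : list nat) : nat :=
  match X with [] => 0 | e :: X' => 2 ^ e + sumpow X' end.

Lemma blocks_length El : length (flat_map block El) = sumpow El.
Proof.
  induction El as [|e El IH]; cbn; [reflexivity|].
  rewrite length_app, IH. unfold block. now rewrite length_seq.
Qed.

Lemma sumpow_app X Y : sumpow (X ++ Y) = sumpow X + sumpow Y.
Proof. induction X as [|x X IH]; cbn; lia. Qed.

Lemma sumpow_ge X x : In x X -> 2 ^ x <= sumpow X.
Proof. induction X as [|a X IH]; cbn; [contradiction|]. intros [->|H]; [lia|]. apply IH in H. lia. Qed.

Definition bounded (M : nat) (X : list nat) := forall x, In x X -> x < M.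

Lemma bounded_pred M X : bounded (S M) X -> ~ In M X -> bounded M X.
Proof. intros H HM x Hx. assert (x <> M) by (intros ->; contradiction). specialize (H x Hx). lia. Qed.

Lemma sumpow_split M X : NoDup X -> bounded (S M) X -> In M X ->
  exists X0, NoDup X0 /\ bounded M X0 /\ sumpow X = 2 ^ M + sumpow X0 /\
             forall x, In x X <-> x = M \/ In x X0.
Proof.
  intros Hnd Hb (l1 & l2 & ->)%in_split.
  exists (l1 ++ l2). split; [exact (NoDup_remove_1 _ _ _ Hnd)|].
  split; [|split; [rewrite !sumpow_app; cbn; lia|]].
  - apply bounded_pred; [|exact (NoDup_remove_2 _ _ _ Hnd)].
    intros x Hx. apply Hb. rewrite in_app_iff in *. cbn. tauto.
  - intros x. rewrite !in_app_iff. cbn. intuition.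
Qed.

Lemma sumpow_lt M X : NoDup X -> bounded M X -> sumpow X < 2 ^ M.
Proof.
  revert X. induction M as [|M IH]; intros X Hnd Hb.
  - destruct X as [|x X]; [cbn; lia|]. specialize (Hb x (or_introl eq_refl)). lia.
  - rewrite Nat.pow_succ_r'. destruct (in_dec Nat.eq_dec M X) as [HM|HM].
    + destruct (sumpow_split M X Hnd Hb HM) as (X0 & Hnd0 & Hb0 & -> & _).
      pose proof (IH X0 Hnd0 Hb0). lia.
    + pose proof (IH X Hnd (bounded_pred M X Hb HM)). lia.
Qed.

Lemma sumpow_top M X X' : NoDup X' -> bounded (S M) X' ->
  sumpow X = sumpow X' -> In M X -> In M X'.
Proof.
  intros Hnd' Hb' Hs HM. apply NNPP. intros HM'.
  pose proof (sumpow_lt M X' Hnd' (bounded_pred M X' Hb' HM')).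
  pose proof (sumpow_ge X M HM). lia.
Qed.

Lemma sumpow_inj M X X' : NoDup X -> NoDup X' -> bounded M X -> bounded M X' ->
  sumpow X = sumpow X' -> forall x, In x X <-> In x X'.
Proof.
  revert X X'. induction M as [|M IH]; intros X X' Hnd Hnd' Hb Hb' Hs x.
  - split; [intros Hx%Hb|intros Hx%Hb']; lia.
  - destruct (in_dec Nat.eq_dec M X) as [HM|HM].
    + pose proof (sumpow_top M X X' Hnd' Hb' Hs HM) as HM'.
      destruct (sumpow_split M X Hnd Hb HM) as (X0 & Hnd0 & Hb0 & Hs0 & HX0).
      destruct (sumpow_split M X' Hnd' Hb' HM') as (X0' & Hnd0' & Hb0' & Hs0' & HX0').
      rewrite HX0, HX0', (IH X0 X0' Hnd0 Hnd0' Hb0 Hb0' ltac:(lia) x). reflexivity.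
    + assert (HM' : ~ In M X')
        by (intros HM'; exact (HM (sumpow_top M X' X Hnd Hb (eq_sym Hs) HM'))).
      apply IH; try apply bounded_pred; assumption.
Qed.

Lemma in_le_list_max l x : In x l -> x <= list_max l.
Proof.
  intros Hx. pose proof (proj1 (list_max_le l (list_max l)) (le_n _)) as Hmax.
  rewrite Forall_forall in Hmax. now apply Hmax.
Qed.

Lemma iso_images_same_codes lo A A' B B' :
  finite_structure A -> finite_structure A' ->
  same_diagram B (label_structure lo A) -> same_diagram B' (label_structure lo A') ->
  iso [2] B B' -> forall e, is_code A e <-> is_code A' e.
Proof.
  intros [u Hu] [u' Hu'] HB HB' Hiso.
  destruct (codes_list A u Hu) as (El & Hnd & HE & HL).
  destruct (codes_list A' u' Hu') as (El' & Hnd' & HE' & HL').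
  assert (UB : forall x, univ B x <-> In x (flat_map block El))
    by (intros x; rewrite <- in_diagram_eq, (HB _), in_diagram_eq; apply HL).
  assert (UB' : forall x, univ B' x <-> In x (flat_map block El'))
    by (intros x; rewrite <- in_diagram_eq, (HB' _), in_diagram_eq; apply HL').
  pose proof (iso_card B B' _ _ Hiso UB UB' (blocks_NoDup El Hnd) (blocks_NoDup El' Hnd'))
    as Hcard.
  rewrite !blocks_length in Hcard.
  set (M := S (list_max (El ++ El'))).
  assert (HbM : forall x, In x El \/ In x El' -> x < M).
  { intros x Hx. enough (x <= list_max (El ++ El')) by (unfold M; lia).
    apply in_le_list_max, in_app_iff, Hx. }
  intros e. rewrite HE, HE'.
  apply (sumpow_inj M); auto; intros x Hx; apply HbM; auto.
Qed.

(** ** Structures with the same codes are isomorphic *)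

Fixpoint idx (x : nat) (l : list nat) : nat :=
  match l with [] => 0 | y :: l' => if x =? y then 0 else S (idx x l') end.

Lemma idx_nth l i : NoDup l -> i < length l -> idx (nth i l 0) l = i.
Proof.
  revert i. induction l as [|y l IH]; intros i Hnd Hi; cbn in *; [lia|].
  inversion Hnd as [|? ? Hy Hnd']; subst. destruct i as [|i]; [now rewrite Nat.eqb_refl|].
  destruct (Nat.eqb_spec (nth i l 0) y) as [E|_].
  - exfalso. apply Hy. rewrite <- E. apply nth_In. lia.
  - f_equal. apply IH; [exact Hnd'|lia].
Qed.

Lemma idx_enum (t : nat -> nat) n i :
  inj_below t n -> i < n -> idx (t i) (map t (seq 0 n)) = i.
Proof.
  intros Hinj Hi. pose proof (nth_map_seq t 0 n i Hi) as Ht. cbn in Ht. rewrite <- Ht.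
  apply idx_nth; [now apply NoDup_map_seq|now rewrite length_map, length_seq].
Qed.

Lemma iso_of_enumerations A A' n (t t' : nat -> nat) :
  inj_below t n -> inj_below t' n ->
  (forall x, univ A x <-> enumerated t n x) -> (forall y, univ A' y <-> enumerated t' n y) ->
  (forall i j, i < n -> j < n -> rel A 0 [t i; t j] <-> rel A' 0 [t' i; t' j]) ->
  iso [2] A A'.
Proof.
  intros Hinj Hinj' HA HA' Hrel.
  exists (fun x => t' (idx x (map t (seq 0 n)))), (fun y => t (idx y (map t' (seq 0 n)))).
  split; [|split].
  - intros x (i & Hi & ->)%HA. rewrite !idx_enum by assumption.
    split; [apply HA'; now exists i|reflexivity].
  - intros y (i & Hi & ->)%HA'. rewrite !idx_enum by assumption.
    split; [apply HA; now exists i|reflexivity].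
  - intros k args Hk Hlen Hargs. cbn in Hk. assert (k = 0) as -> by lia.
    destruct args as [|x [|y [|z args]]]; cbn in Hlen; try lia.
    inversion Hargs as [|? ? Hx Hargs']; inversion Hargs' as [|? ? Hy _]; subst.
    apply HA in Hx as (i & Hi & ->). apply HA in Hy as (j & Hj & ->).
    cbn [map]. rewrite !idx_enum by assumption. now apply Hrel.
Qed.

Lemma enumeration_exhausts (t : nat -> nat) n u :
  inj_below t n -> (forall i, i < n -> In (t i) u) -> length u <= n ->
  forall y, In y u -> enumerated t n y.
Proof.
  intros Hinj Ht Hlen y Hy.
  assert (Hincl : incl u (map t (seq 0 n))).
  { apply NoDup_length_incl; [now apply NoDup_map_seq|now rewrite length_map, length_seq|].
    intros x (i & <- & Hi)%in_map_iff. apply in_seq in Hi. apply Ht. lia. }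
  apply Hincl, in_map_iff in Hy as (i & <- & Hi). apply in_seq in Hi. exists i. split; [lia|reflexivity].
Qed.

Lemma full_pattern A u : NoDup u -> (forall x, univ A x <-> In x u) ->
  exists b T c, is_pattern A (length u) c /\ inj_below (dig T b) (length u) /\
    realizes A b T (length u) c /\ forall i, i < length u -> dig T b i = nth i u 0.
Proof.
  intros Hnd Hu. set (n := length u).
  destruct (sequence_code (fun i => nth i u 0) n) as (b & T & HT).
  destruct (bits_exist (fun k => rel A 0 [nth (k / n) u 0; nth (k mod n) u 0]) (n * n))
    as (c & Hc & Hbits).
  assert (Hinj : inj_below (dig T b) n).
  { intros i j Hi Hj E. rewrite !HT in E by assumption. eapply NoDup_nth; eassumption. }
  assert (R : realizes A b T n c).
  { apply realizes_intro. intros i j Hi Hj. rewrite !HT by assumption.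
    split; [apply Hu, nth_In; exact Hi|].
    rewrite Hbits by nia. destruct (divmod_pair n i j Hj) as [-> ->]. reflexivity. }
  exists b, T, c. split; [exists b, T; split; [now apply injb_spec|auto]|auto].
Qed.

(** Finite structures with the same patterns are isomorphic: compare the
    enumerations of full length. *)
Lemma iso_of_same_patterns A A' u u' : NoDup u -> NoDup u' ->
  (forall x, univ A x <-> In x u) -> (forall x, univ A' x <-> In x u') ->
  (forall m c, is_pattern A m c <-> is_pattern A' m c) -> iso [2] A A'.
Proof.
  intros Hnd Hnd' Hu Hu' HP. set (n := length u).
  destruct (full_pattern A u Hnd Hu) as (b & T & c & HPc & Hinj & R & HT).
  destruct (proj1 (HP n c) HPc) as (b' & T' & Hinj' & _ & R'). apply injb_spec in Hinj'.
  destruct (full_pattern A' u' Hnd' Hu') as (_ & _ & c' & HPc' & _).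
  assert (Hlen : length u' <= n) by (apply (pattern_length_bound A u _ c' Hu), HP, HPc').
  apply (iso_of_enumerations A A' n (dig T b) (dig T' b')); [assumption..| | |].
  - intros x. rewrite Hu. split.
    + apply enumeration_exhausts; [assumption| |lia].
      intros i Hi. rewrite HT by assumption. now apply nth_In.
    + intros (i & Hi & ->). apply Hu, (realizes_rel A b T n c i i R Hi Hi).
  - intros y. rewrite Hu'. split.
    + apply enumeration_exhausts; [assumption| |lia].
      intros i Hi. apply Hu', (realizes_rel A' b' T' n c i i R' Hi Hi).
    + intros (i & Hi & ->). apply Hu', (realizes_rel A' b' T' n c i i R' Hi Hi).
  - intros i j Hi Hj.
    rewrite (proj2 (realizes_rel A b T n c i j R Hi Hj)).
    now rewrite (proj2 (realizes_rel A' b' T' n c i j R' Hi Hj)).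
Qed.

Lemma pattern_of_code A A' m c :
  (forall e, is_code A e -> is_code A' e) -> is_pattern A m c -> is_pattern A' m c.
Proof.
  intros HE HP. destruct (HE (off m + c)) as (m' & c' & HP' & E); [now exists m, c|].
  destruct HP as (_ & _ & _ & Hc & _). destruct HP' as (b' & T' & I' & Hc' & R').
  destruct (off_inj m c m' c' Hc Hc' E) as [-> ->]. now exists b', T'.
Qed.

Lemma finite_nodup A : finite_structure A -> exists u, NoDup u /\ forall x, univ A x <-> In x u.
Proof.
  intros [u Hu]. exists (nodup Nat.eq_dec u). split; [apply NoDup_nodup|].
  intros x. rewrite nodup_In. apply Hu.
Qed.

Lemma iso_of_same_codes A A' : finite_structure A -> finite_structure A' ->
  (forall e, is_code A e <-> is_code A' e) -> iso [2] A A'.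
Proof.
  intros HA HA' HE.
  destruct (finite_nodup A HA) as (u & Hnd & Hu). destruct (finite_nodup A' HA') as (u' & Hnd' & Hu').
  apply (iso_of_same_patterns A A' u u'); [assumption..|].
  intros m c. split; apply pattern_of_code; intros e; apply HE.
Qed.

Theorem label_embedding K K' lo : lang K = [2] -> lang K' = [2] ->
  (forall A, mem K A -> finite_structure A) ->
  (forall A, mem K A -> mem K' (label_structure lo A)) -> le_c K K'.
Proof.
  intros HK HK' Hfin Hmem. exists (Phi lo). split; [split; [|split]|].
  - apply Phi_ce.
  - intros alpha phi HPhi. rewrite HK, HK'. split; [exact (Phi_premises_satisfiable lo alpha phi HPhi)|].
    destruct HPhi as (b1 & T1 & m1 & c1 & j1 & b2 & T2 & m2 & c2 & j2 & kind & _ & He).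
    injection He as _ ->. apply label_fact_wf.
  - intros A HA. exists (label_structure lo A). split; [now apply Hmem|now apply Phi_image].
  - intros A A' B B' HA HA' HB HB'. rewrite HK, HK'. split.
    + now apply (iso_same_image K K' lo A A' B B').
    + intros Hiso. apply iso_of_same_codes; [now apply Hfin..|].
      apply (iso_images_same_codes lo A A' B B'); [now apply Hfin..| | |exact Hiso].
      * now apply (image_same_diagram K K' lo A B).
      * now apply (image_same_diagram K K' lo A' B').
Qed.

Theorem theorem2p5 : equiv_c FUG FLO.
Proof.
  split.
  - (* B_true(A) is the restriction of ≤ to a finite set. *)
    apply (label_embedding FUG FLO true); [reflexivity|reflexivity|now intros A []|].
    intros A [Hfin _]. split; [now apply label_structure_finite|].
    cbn [label_structure rel out_rel]. repeat split.
    + intros x _. apply Nat.leb_refl.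
    + intros x y _ _ H1%Nat.leb_le H2%Nat.leb_le. lia.
    + intros x y z _ _ _ H1%Nat.leb_le H2%Nat.leb_le. apply Nat.leb_le. lia.
    + intros x y _ _. destruct (Nat.le_ge_cases x y); [left|right]; now apply Nat.leb_le.
  - (* B_false(A) is a finite edgeless graph. *)
    apply (label_embedding FLO FUG false); [reflexivity|reflexivity|now intros A []|].
    intros A [Hfin _]. split; [now apply label_structure_finite|].
    cbn [label_structure rel out_rel]. split; intros; discriminate.
Qed.
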